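(* Let $G$ and $H$ be locally finite stiff graphs without isolated vertices. If $N(G)\cong N(H)$ as simplicial complexes, then $K_2\times G\cong K_2\times H$ as 2-colored graphs (i.e. via a graph isomorphism commuting with the first projections to $K_2$).
   Context: A graph $G$ is a set $V(G)$ with a symmetric subset $E(G)\subset V(G)\times V(G)$ (loops allowed); $N(v)=\{w:(v,w)\in E(G)\}$, $v$ isolated if $N(v)=\emptyset$; $G$ is locally finite if every $N(v)$ is finite, and stiff if $N(v)\subset N(w)$ implies $v=w$. The neighborhood complex $N(G)$ is the simplicial complex whose vertices are the non-isolated vertices of $G$ and whose simplices are the finite subsets contained in some $N(v)$. $K_2\times G$ has vertex set $\{1,2\}\times V(G)$, $((i,x),(j,y))$ an edge iff $i\neq j$ and $(x,y)\in E(G)$, and is 2-colored by the first projection to $K_2$ (vertices $\{1,2\}$, edges $(1,2),(2,1)$). *)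

(* graphs may be infinite, so vertex sets are arbitrary Types. *)
From Stdlib Require Import List.
Import ListNotations.

(* A graph is a vertex type V with a symmetric relation E (loops allowed). *)
Definition symmetric_rel {V : Type} (E : V -> V -> Prop) : Prop :=
  forall x y, E x y -> E y x.

Definition isolated {V : Type} (E : V -> V -> Prop) (v : V) : Prop :=
  forall w, ~ E v w.

Definition no_isolated {V : Type} (E : V -> V -> Prop) : Prop :=
  forall v, ~ isolated E v.

Definition locally_finite {V : Type} (E : V -> V -> Prop) : Prop :=
  forall v, exists l : list V, forall w, E v w -> In w l.

Definition stiff {V : Type} (E : V -> V -> Prop) : Prop :=
  forall v w, (forall x, E v x -> E w x) -> v = w.

Definition bijective_map {A B : Type} (f : A -> B) : Prop :=
  exists g : B -> A, (forall a, g (f a) = a) /\ (forall b, f (g b) = b).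

Definition graph_iso {V W : Type} (E : V -> V -> Prop) (F : W -> W -> Prop)
  (f : V -> W) : Prop :=
  bijective_map f /\ forall x y, E x y <-> F (f x) (f y).

(* Neighborhood complex N(G): vertices are the non-isolated vertices of G;
   simplices are the nonempty finite subsets (given by lists) contained in
   some N(v). *)
Definition NVert {V : Type} (E : V -> V -> Prop) : Type :=
  { v : V | ~ isolated E v }.

Definition N_simplex {V : Type} (E : V -> V -> Prop) (s : list (NVert E)) : Prop :=
  s <> [] /\ exists v : V, forall x, In x s -> E v (proj1_sig x).

Definition nbhd_complex_iso {V W : Type} (E : V -> V -> Prop) (F : W -> W -> Prop) : Prop :=
  exists f : NVert E -> NVert F,
    bijective_map f /\ forall s, N_simplex E s <-> N_simplex F (map f s).

(* K_2 × G: vertices {1,2} × V(G), encoded as bool * V. *)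
Definition K2x {V : Type} (E : V -> V -> Prop) : bool * V -> bool * V -> Prop :=
  fun p q => fst p <> fst q /\ E (snd p) (snd q).

Definition K2x_iso_colored {V W : Type} (E : V -> V -> Prop) (F : W -> W -> Prop) : Prop :=
  exists phi : bool * V -> bool * W,
    graph_iso (K2x E) (K2x F) phi /\ forall p, fst (phi p) = fst p.

(* Since G has no isolated vertices, N(G) has all of V(G) as vertex set and
   every neighborhood N(v) is a simplex; being finite and nonempty, its image
   under a complex isomorphism f lies in some N(w).  Pulling N(w) back gives a
   simplex inside some N(v'), and stiffness forces v' = v, so f(N(v)) = N(w)
   exactly.  Stiffness of H makes w unique, and by symmetry v |-> w is a
   bijection g with E v x <-> F (g v) (f x).  The map (1, v) |-> (1, f v),
   (2, v) |-> (2, g v) is then a 2-colored isomorphism K_2 x G -> K_2 x H. *)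
From Stdlib Require Import List Classical ClassicalEpsilon ProofIrrelevance.
Import ListNotations.

Definition common_nbr {V : Type} (E : V -> V -> Prop) (s : list V) : Prop :=
  exists v, forall x, In x s -> E v x.

Definition nbhd_preserving {V W : Type} (E : V -> V -> Prop) (F : W -> W -> Prop)
  (f : V -> W) : Prop :=
  forall s, s <> [] -> (common_nbr E s <-> common_nbr F (map f s)).

Lemma map_cancel {A B : Type} (f : A -> B) (g : B -> A) :
  (forall b, f (g b) = b) -> forall s, map f (map g s) = s.
Proof.
  intros fg s. rewrite map_map, (map_ext _ id), map_id; [reflexivity | exact fg].
Qed.

Lemma nbhd_preserving_inv {V W : Type} (E : V -> V -> Prop) (F : W -> W -> Prop)
  (f : V -> W) (g : W -> V) (fg : forall w, f (g w) = w) :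
  nbhd_preserving E F f -> nbhd_preserving F E g.
Proof.
  intros hf t t_ne.
  assert (gt_ne : map g t <> []) by (destruct t; [contradiction | discriminate]).
  rewrite (hf _ gt_ne), map_cancel by exact fg. tauto.
Qed.

Lemma nbhd_list {V : Type} (E : V -> V -> Prop) :
  locally_finite E -> forall v, exists s, forall x, In x s <-> E v x.
Proof.
  intros lf v.
  assert (filtered : forall l, exists s, forall x, In x s <-> In x l /\ E v x).
  { induction l as [| a l IH].
    - exists []. simpl. tauto.
    - destruct IH as [s Hs].
      destruct (classic (E v a)); [exists (a :: s) | exists s];
        intros x; simpl; rewrite Hs; split; firstorder congruence. }
  destruct (lf v) as [l hl], (filtered l) as [s Hs].
  exists s. intros x. rewrite Hs. firstorder.
Qed.

Lemma nonisolated_nbr {V : Type} (E : V -> V -> Prop) v :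
  ~ isolated E v -> exists u, E v u.
Proof. exact (not_all_not_ex _ _). Qed.

Section NeighborhoodImage.

Variables (V W : Type) (E : V -> V -> Prop) (F : W -> W -> Prop).
Variables (f : V -> W) (g : W -> V).
Hypothesis gf : forall v, g (f v) = v.
Hypothesis fg : forall w, f (g w) = w.
Hypothesis hf : nbhd_preserving E F f.

Lemma nbhd_image_is_nbhd (lfE : locally_finite E) (lfF : locally_finite F)
  (niE : no_isolated E) (stE : stiff E) v :
  exists w, forall x, E v x <-> F w (f x).
Proof.
  destruct (nbhd_list E lfE v) as [s Hs].
  destruct (nonisolated_nbr E v (niE v)) as [u Evu].
  assert (s_ne : s <> []) by (intros ->; now apply (Hs u)).
  assert (Ns : common_nbr E s) by (exists v; intros x; apply Hs).
  apply (hf s s_ne) in Ns. destruct Ns as [w Hw].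
  assert (Hwf : forall x, E v x -> F w (f x))
    by (intros x Ex; apply Hw, in_map, Hs, Ex).
  destruct (nbhd_list F lfF w) as [t Ht].
  assert (gt_ne : map g t <> []).
  { assert (In (g (f u)) (map g t)) as gfu_in by apply in_map, Ht, Hwf, Evu.
    intros e. rewrite e in gfu_in. destruct gfu_in. }
  assert (Nt : common_nbr F (map f (map g t))).
  { rewrite map_cancel by exact fg. exists w. intros y. apply Ht. }
  apply (hf _ gt_ne) in Nt. destruct Nt as [v' Hv'].
  assert (Ev'f : forall x, F w (f x) -> E v' x).
  { intros x Fx. rewrite <- (gf x). apply Hv', in_map, Ht, Fx. }
  assert (v = v') as <- by (apply stE; auto).
  exists w. split; auto.
Qed.

End NeighborhoodImage.

Lemma bijective_of_one_to_one_rel {A B : Type} (R : A -> B -> Prop) :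
  (forall a, exists b, R a b) -> (forall b, exists a, R a b) ->
  (forall a b b', R a b -> R a b' -> b = b') ->
  (forall a a' b, R a b -> R a' b -> a = a') ->
  exists g : A -> B, bijective_map g /\ forall a, R a (g a).
Proof.
  intros total surj uniqB uniqA.
  destruct (choice R total) as [g Hg].
  destruct (choice (fun b a => R a b) surj) as [h Hh].
  exists g. split; [exists h; split|]; eauto.
Qed.

Lemma nbhd_matching_bijection (V W : Type) (E : V -> V -> Prop) (F : W -> W -> Prop)
  (lfE : locally_finite E) (lfF : locally_finite F)
  (stE : stiff E) (stF : stiff F)
  (niE : no_isolated E) (niF : no_isolated F)
  (f : V -> W) (hfb : bijective_map f) (hf : nbhd_preserving E F f) :
  exists g : V -> W, bijective_map g /\ forall v x, E v x <-> F (g v) (f x).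
Proof.
  destruct hfb as [fi [fif ffi]].
  apply (bijective_of_one_to_one_rel (fun v w => forall x, E v x <-> F w (f x))).
  - exact (nbhd_image_is_nbhd V W E F f fi fif ffi hf lfE lfF niE stE).
  - intros w.
    destruct (nbhd_image_is_nbhd W V F E fi f ffi fif
                (nbhd_preserving_inv E F f fi ffi hf) lfF lfE niF stF w) as [v Hv].
    exists v. intros x. rewrite Hv, fif. tauto.
  - intros v w w' Hw Hw'. apply stF. intros y Fy.
    rewrite <- (ffi y) in *. now apply Hw', Hw.
  - intros v v' w Hv Hv'. apply stE. intros x Ex. now apply Hv', Hv.
Qed.

Section NeighborhoodComplexVertices.

Variables (V : Type) (E : V -> V -> Prop).
Hypothesis niE : no_isolated E.

Definition nvert (v : V) : NVert E := exist _ v (niE v).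

Lemma nvert_proj (x : NVert E) : nvert (proj1_sig x) = x.
Proof. destruct x as [v nv]. unfold nvert. f_equal. apply proof_irrelevance. Qed.

Lemma N_simplex_map_nvert (s : list V) :
  N_simplex E (map nvert s) <-> s <> [] /\ common_nbr E s.
Proof.
  unfold N_simplex, common_nbr.
  assert (map nvert s = [] <-> s = []) by (destruct s; simpl; split; congruence).
  split; intros [ne [v Hv]]; split; try tauto; exists v.
  - intros x Hx. exact (Hv (nvert x) (in_map _ _ _ Hx)).
  - intros x Hx. apply in_map_iff in Hx as [y [<- Hy]]. exact (Hv y Hy).
Qed.

End NeighborhoodComplexVertices.

Lemma vertex_map_of_nbhd_complex_iso (V W : Type) (E : V -> V -> Prop) (F : W -> W -> Prop)
  (niE : no_isolated E) (niF : no_isolated F) :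
  nbhd_complex_iso E F ->
  exists f : V -> W, bijective_map f /\ nbhd_preserving E F f.
Proof.
  intros [c [[ci [cic cci]] hc]].
  exists (fun v => proj1_sig (c (nvert V E niE v))). split.
  - exists (fun w => proj1_sig (ci (nvert W F niF w))).
    split; intros; rewrite nvert_proj; [rewrite cic | rewrite cci]; reflexivity.
  - intros s s_ne.
    assert (map c (map (nvert V E niE) s)
            = map (nvert W F niF) (map (fun v => proj1_sig (c (nvert V E niE v))) s))
      as commute.
    { rewrite !map_map. apply map_ext. intros. symmetry. apply nvert_proj. }
    pose proof (hc (map (nvert V E niE) s)) as Hs.
    rewrite commute, !N_simplex_map_nvert in Hs.
    assert (map (fun v => proj1_sig (c (nvert V E niE v))) s <> [])
      by (destruct s; [contradiction | discriminate]).
    tauto.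
Qed.

Lemma symmetric_rel_iff {U : Type} (R : U -> U -> Prop) :
  symmetric_rel R -> forall a b, R a b <-> R b a.
Proof. split; auto. Qed.

Lemma K2x_iso_colored_of_matching (V W : Type) (E : V -> V -> Prop) (F : W -> W -> Prop)
  (hE : symmetric_rel E) (hF : symmetric_rel F) (f g : V -> W)
  (hf : bijective_map f) (hg : bijective_map g)
  (hfg : forall v x, E v x <-> F (g v) (f x)) :
  K2x_iso_colored E F.
Proof.
  destruct hf as [fi [fif ffi]], hg as [gi [gig ggi]].
  exists (fun p : bool * V => if fst p then (true, f (snd p)) else (false, g (snd p))).
  split; [split|].
  - exists (fun q : bool * W => if fst q then (true, fi (snd q)) else (false, gi (snd q))).
    split; intros [[|] a]; simpl; congruence.
  - intros [[|] a] [[|] b]; unfold K2x; simpl;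
      try (split; intros [neq _]; now contradiction neq).
    + now rewrite (symmetric_rel_iff E hE a b), hfg, (symmetric_rel_iff F hF (g b) (f a)).
    + now rewrite hfg.
  - intros [[|] a]; reflexivity.
Qed.

Theorem corollary4p12 (V W : Type) (E : V -> V -> Prop) (F : W -> W -> Prop)
  (hE : symmetric_rel E) (hF : symmetric_rel F)
  (lfE : locally_finite E) (lfF : locally_finite F)
  (stE : stiff E) (stF : stiff F)
  (niE : no_isolated E) (niF : no_isolated F)
  (hN : nbhd_complex_iso E F) :
  K2x_iso_colored E F.
Proof.
  destruct (vertex_map_of_nbhd_complex_iso V W E F niE niF hN) as [f [hfb hf]].
  destruct (nbhd_matching_bijection V W E F lfE lfF stE stF niE niF f hfb hf)
    as [g [hgb hfg]].
  exact (K2x_iso_colored_of_matching V W E F hE hF f g hfb hgb hfg).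
Qed.
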